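(* Let $W_1$, $W_2$ be monotone complete ordered vector spaces, and assume that $W_1$ carries a faithful normal positive linear functional. Then every sequentially normal positive linear map $\phi: W_1\to W_2$ is normal.
   Context: An ordered vector space $W$ is called monotone complete if every non-empty upper bounded upward directed subset of $W$ has a supremum in $W$. A positive linear functional $\psi$ on $W$ is faithful if $\psi(a)>0$ for every positive $a\neq 0$ in $W$. A positive linear map $\phi:W_1\to W_2$ between monotone complete ordered vector spaces is called normal if $\phi(\sup J)=\sup_{j\in J}\phi(j)$ for every non-empty upper bounded upward directed subset $J$ of $W_1$, and sequentially normal if $\phi(\sup_n j_n)=\sup_n\phi(j_n)$ for every upper bounded increasing sequence $(j_n)$ in $W_1$. (A normal positive linear functional is the case $W_2=\mathbb{R}$.) *)

From HB Require Import structures.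
From mathcomp Require Import all_boot all_order all_algebra.
From mathcomp Require Import boolp classical_sets reals.
Set Implicit Arguments. Unset Strict Implicit. Unset Printing Implicit Defensive.
Import Order.TTheory GRing.Theory Num.Theory.
Local Open Scope ring_scope.
Local Open Scope classical_set_scope.

Definition is_ub {T : Type} (le : T -> T -> Prop) (A : set T) (u : T) :=
  forall x, A x -> le x u.

Definition is_sup {T : Type} (le : T -> T -> Prop) (A : set T) (s : T) :=
  is_ub le A s /\ forall u, is_ub le A u -> le s u.

Definition upward_directed {T : Type} (le : T -> T -> Prop) (A : set T) :=
  forall a b, A a -> A b -> exists2 c, A c & le a c /\ le b c.

Definition bdd_directed {T : Type} (le : T -> T -> Prop) (A : set T) :=
  [/\ exists x, A x, upward_directed le A & exists u, is_ub le A u].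

Definition ordered_vspace (R : realType) (V : lmodType R) (le : V -> V -> Prop) :=
  [/\ forall x, le x x,
      forall x y, le x y -> le y x -> x = y,
      forall x y z, le x y -> le y z -> le x z,
      forall x y z, le x y -> le (x + z) (y + z)
    & forall (c : R) x y, 0 <= c -> le x y -> le (c *: x) (c *: y)].

Definition monotone_complete {T : Type} (le : T -> T -> Prop) :=
  forall A : set T, bdd_directed le A -> exists s, is_sup le A s.

Definition linear_map (R : realType) (V1 V2 : lmodType R) (f : V1 -> V2) :=
  forall (c : R) x y, f (c *: x + y) = c *: f x + f y.

Definition positive_linear (R : realType) (V1 V2 : lmodType R)
    (le1 : V1 -> V1 -> Prop) (le2 : V2 -> V2 -> Prop) (f : V1 -> V2) :=
  linear_map f /\ forall x, le1 0 x -> le2 0 (f x).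

Definition normal_map {T1 T2 : Type}
    (le1 : T1 -> T1 -> Prop) (le2 : T2 -> T2 -> Prop) (f : T1 -> T2) :=
  forall (J : set T1) s, bdd_directed le1 J -> is_sup le1 J s ->
    is_sup le2 (f @` J) (f s).

Definition seq_normal_map {T1 T2 : Type}
    (le1 : T1 -> T1 -> Prop) (le2 : T2 -> T2 -> Prop) (f : T1 -> T2) :=
  forall (j : nat -> T1) s, (forall n, le1 (j n) (j n.+1)) ->
    (exists u, is_ub le1 (range j) u) -> is_sup le1 (range j) s ->
    is_sup le2 (range (f \o j)) (f s).

Definition faithful_functional (R : realType) (V : lmodType R)
    (le : V -> V -> Prop) (psi : V -> R) :=
  forall a, le 0 a -> a <> 0 -> 0 < psi a.

From HB Require Import structures.
From mathcomp Require Import all_boot all_order all_algebra.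
From mathcomp Require Import boolp classical_sets reals.
Import Order.TTheory GRing.Theory Num.Theory.
Local Open Scope ring_scope.
Local Open Scope classical_set_scope.

(* Let J be directed with supremum s.  Since psi is normal, psi s is the
   supremum of psi(J), so J contains x_n with psi x_n > psi s - 1/(n+1); by
   directedness these are dominated by an increasing sequence k_n in J.  Its
   supremum t satisfies t <= s and psi t >= psi s, hence s = t because psi is
   faithful.  Thus s is the supremum of a sequence in J, and sequential
   normality of phi gives phi s = sup phi(k_n) <= sup phi(J) <= phi s. *)

Lemma is_sup_superset {T : Type} {le : T -> T -> Prop} {A B : set T} {s : T} :
  A `<=` B -> is_ub le B s -> is_sup le A s -> is_sup le B s.
Proof. by move=> AB ubB [_ leastA]; split=> // u ubu; apply: leastA => a /AB/ubu. Qed.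

Lemma directed_seq_majorant {T : Type} {le : T -> T -> Prop} {J : set T}
    {x : nat -> T} :
  upward_directed le J -> (forall n, J (x n)) ->
  exists k : nat -> T,
    [/\ forall n, J (k n), forall n, le (x n) (k n) & forall n, le (k n) (k n.+1)].
Proof.
move=> dirJ Jx.
have /choice[g gP] : forall a, exists h : T -> T, forall b, J a -> J b ->
    [/\ J (h b), le a (h b) & le b (h b)].
  move=> a; suff /choice[h hP] : forall b, exists c,
      J a -> J b -> [/\ J c, le a c & le b c] by exists h.
  move=> b; have [[Ja Jb]|notJab] := pselect (J a /\ J b); last first.
    by exists a => Ja Jb; exfalso; apply: notJab.
  by have [c Jc [ac bc]] := dirJ a b Ja Jb; exists c.
pose k := fix k n := if n is m.+1 then g (k m) (x m.+1) else g (x 0) (x 0).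
have Jk n : J (k n).
  by elim: n => [|n Jkn]; [case: (gP _ _ (Jx 0) (Jx 0)) | case: (gP _ _ Jkn (Jx n.+1))].
exists k; split=> // n; last by case: (gP _ _ (Jk n) (Jx n.+1)).
by case: n => [|n]; [case: (gP _ _ (Jx 0) (Jx 0)) | case: (gP _ _ (Jk n) (Jx n.+1))].
Qed.

Lemma ler_of_ltrBinvS (R : archiRealFieldType) (a b : R) :
  (forall n : nat, a - n.+1%:R^-1 < b) -> a <= b.
Proof.
move=> ltab; apply/ler_addgt0Pr => e e_gt0.
have e_inv_gt0 : 0 <= e^-1 by rewrite invr_ge0 ltW.
pose n := Num.Def.archi_bound e^-1.
have inv_lt_e : n.+1%:R^-1 < e.
  rewrite -[e]invrK ltf_pV2 ?posrE ?invr_gt0 //.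
  by apply: lt_trans (archi_boundP e_inv_gt0) _; rewrite ltr_nat.
by rewrite -lerBlDr ltW // (lt_trans _ (ltab n)) // ltrD2l ltrN2.
Qed.

Lemma is_sup_approx {R : realFieldType} {A : set R} {r : R} :
  is_sup (fun x y : R => x <= y) A r ->
  forall n : nat, exists2 a, A a & r - n.+1%:R^-1 < a.
Proof.
move=> [_ leastA] n; apply: contrapT => noa.
have : r <= r - n.+1%:R^-1.
  by apply: leastA => a Aa; rewrite leNgt; apply/negP => lt_ra; apply: noa; exists a.
by rewrite lerDl oppr_ge0 invr_le0 lern0.
Qed.

Lemma ordered_vspace_real (R : realType) :
  ordered_vspace (fun x y : R^o => x <= y).
Proof.
split=> [x|x y xy yx|x y z|x y z|c x y c_ge0 xy]; rewrite ?lerD2r //.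
- by apply/eqP; rewrite eq_le xy yx.
- exact: le_trans.
- exact: ler_wpM2l.
Qed.

Lemma linear_mapB (R : realType) (V1 V2 : lmodType R) (f : V1 -> V2) :
  linear_map f -> forall x y, f (y - x) = f y - f x.
Proof. by move=> lf x y; rewrite addrC -scaleN1r lf scaleN1r addrC. Qed.

Lemma ov_subr_ge0 {R : realType} {V : lmodType R} {le : V -> V -> Prop}
    (ov : ordered_vspace le) x y :
  le 0 (y - x) <-> le x y.
Proof.
have [_ _ _ leD _] := ov.
by split=> [/(leD _ _ x)|/(leD _ _ (- x))]; rewrite ?add0r ?subrK ?subrr.
Qed.

Section OrderedVectorSpace.
Context {R : realType} {V : lmodType R} {le : V -> V -> Prop}.
Hypothesis ov : ordered_vspace le.

Lemma bounded_increasing_seq_has_sup {k : nat -> V} {u : V} :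
  monotone_complete le -> (forall n, le (k n) (k n.+1)) ->
  is_ub le (range k) u -> exists t, is_sup le (range k) t.
Proof.
have [refl _ trans _ _] := ov.
move=> mc k_incr ubk; apply: mc; split; [by exists (k 0), 0 | | by exists u].
move=> _ _ [m _ <-] [n _ <-]; exists (k (maxn m n)); first by exists (maxn m n).
have k_mono := homo_leq refl (fun y x z => @trans x y z) k_incr.
by split; apply: k_mono; rewrite ?leq_maxl ?leq_maxr.
Qed.

Lemma positive_linear_mono {V' : lmodType R} {le' : V' -> V' -> Prop}
    {f : V -> V'} :
  ordered_vspace le' -> positive_linear le le' f ->
  forall x y, le x y -> le' (f x) (f y).
Proof.
move=> ov' [lf f_ge0] x y /(ov_subr_ge0 ov _ _)/f_ge0.
by rewrite linear_mapB // => /(ov_subr_ge0 ov' _ _).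
Qed.

Lemma faithful_le_eq {psi : V -> R^o} {t s : V} :
  positive_linear le (fun x y : R^o => x <= y) psi -> faithful_functional le psi ->
  le t s -> psi s <= psi t -> s = t.
Proof.
move=> [lpsi _] fpsi /(ov_subr_ge0 ov _ _) st_ge0 le_psi; apply/eqP.
rewrite -subr_eq0; apply/eqP; apply: contrapT => /(fpsi _ st_ge0).
by rewrite linear_mapB // subr_gt0 ltNge le_psi.
Qed.

Section FaithfulNormalFunctional.
Hypothesis mc : monotone_complete le.
Context {psi : V -> R^o}.
Hypotheses (psi_pos : positive_linear le (fun x y : R^o => x <= y) psi)
  (psi_faithful : faithful_functional le psi)
  (psi_normal : normal_map le (fun x y : R^o => x <= y) psi).

Lemma directed_sup_is_seq_sup (J : set V) s :
  bdd_directed le J -> is_sup le J s ->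
  exists k : nat -> V,
    [/\ forall n, J (k n), forall n, le (k n) (k n.+1) & is_sup le (range k) s].
Proof.
move=> bJ [ubJ leastJ]; have [_ dirJ _] := bJ.
have psi_mono := positive_linear_mono (ordered_vspace_real R) psi_pos.
have /choice[x xP] : forall n : nat, exists x, J x /\ psi s - n.+1%:R^-1 < psi x.
  move=> n; have [_ [x Jx <-]] := is_sup_approx (psi_normal J s bJ (conj ubJ leastJ)) n.
  by exists x.
have [k [Jk xk k_incr]] := directed_seq_majorant dirJ (fun n => (xP n).1).
have ubk : is_ub le (range k) s by move=> _ [n _ <-]; exact: ubJ.
have [t [ubt leastt]] := bounded_increasing_seq_has_sup mc k_incr ubk.
suff -> : s = t by exists k.
apply: (faithful_le_eq psi_pos psi_faithful (leastt _ ubk)).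
apply: (@ler_of_ltrBinvS R) => n; apply: lt_le_trans (xP n).2 _; apply: psi_mono.
by have [_ _ trans _ _] := ov; apply: trans (xk n) (ubt _ _); exists n.
Qed.

End FaithfulNormalFunctional.
End OrderedVectorSpace.

Theorem theorem2 (R : realType) (W1 W2 : lmodType R)
    (le1 : W1 -> W1 -> Prop) (le2 : W2 -> W2 -> Prop) :
  ordered_vspace le1 -> ordered_vspace le2 ->
  monotone_complete le1 -> monotone_complete le2 ->
  (exists psi : W1 -> R^o,
      [/\ positive_linear le1 (fun x y : R^o => x <= y) psi,
          faithful_functional le1 psi
        & normal_map le1 (fun x y : R^o => x <= y) psi]) ->
  forall phi : W1 -> W2,
    positive_linear le1 le2 phi -> seq_normal_map le1 le2 phi ->
    normal_map le1 le2 phi.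
Proof.
move=> ov1 ov2 mc1 _ [psi [psi_pos psi_faithful psi_normal]] phi phi_pos
  phi_seq_normal J s bJ supJ.
have [k [Jk k_incr supk]] :=
  directed_sup_is_seq_sup ov1 mc1 psi_pos psi_faithful psi_normal J s bJ supJ.
apply: is_sup_superset (phi_seq_normal k s k_incr _ supk).
- by move=> _ [n _ <-]; exists (k n).
- by move=> _ [x Jx <-]; apply: (positive_linear_mono ov1 ov2 phi_pos); apply: supJ.1.
- by exists s; apply: supk.1.
Qed.
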